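(* Let $(\mathcal{C},\psi)$ be a t-pair with $\operatorname{typ}(\mathcal{U}^{ii}_{\mathcal{C}\psi})\ne\alpha$. Then $\operatorname{typ}(\mathcal{U}^{id}_{\mathcal{C}\psi})=\operatorname{typ}(\mathcal{U}^{ia}_{\mathcal{C}\psi})=\epsilon$.
   Context: Let $\mathbb{N}=\{0,1,2,\dots\}$; for an integer $k\ge 2$ let $E_k=\{0,1,\dots,k-1\}$; let $\mathcal{P}(\mathbb{N})$ be the set of nonempty finite subsets of $\mathbb{N}$. Let $F$ be a nonempty set (of attribute names). A decision table $T\in\mathcal{M}_k(F)$ is a rectangular table with $n\ge 1$ columns labeled with attributes $f_1,\dots,f_n\in F$ (any two columns labeled with the same attribute are equal), whose rows are pairwise different tuples from $E_k^n$ (the set of rows may be empty), each row being labeled with a set of decisions from $\mathcal{P}(\mathbb{N})$. Write $At(T)=\{f_1,\dots,f_n\}$ and $\Delta(T)$ for the set of rows. For a word $\alpha=(f_{i_1},\delta_1)\cdots(f_{i_m},\delta_m)$ with $f_{i_j}\in At(T)$, $\delta_j\in E_k$, the subtable $T\alpha$ consists of the rows of $T$ having value $\delta_j$ in column $f_{i_j}$ for all $j$ ($T\lambda=T$ for the empty word $\lambda$). Operations on tables: (1) removal of a column from a table with at least two columns (if groups of equal rows appear, only the first row of each group, with its decision set, is kept); (2) changing of decisions: the decision sets attached to rows are replaced arbitrarily by sets from $\mathcal{P}(\mathbb{N})$; (3) permutation of columns: swap two columns together with their attribute labels; (4) duplication of columns: add a copy of a column (with its label) next to it. A set $\mathcal{C}\subseteq\mathcal{M}_k(F)$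 is a closed class if every table obtained from a table of $\mathcal{C}$ by finitely many such operations belongs to $\mathcal{C}$. A decision tree over $\mathcal{M}_k(F)$ is a finite directed tree with a root (unique node with no entering edge) and at least two nodes such that the root and the edges leaving the root are unlabeled, each worker node (neither root nor terminal) is labeled with an attribute from $F$, each edge leaving a worker node is labeled with a number from $E_k$, and each terminal node is labeled with a number from $\mathbb{N}$. For a complete path $\xi$ (root to terminal node) whose worker nodes are labeled $f_{j_1},\dots,f_{j_m}$ in order, with the edges leaving them labeled $\delta_1,\dots,\delta_m$, put $\pi(\xi)=(f_{j_1},\delta_1)\cdots(f_{j_m},\delta_m)$, $\varphi(\xi)=f_{j_1}\cdots f_{j_m}$ (both empty if $m=0$), and let $\tau(\xi)$ be the label of its terminal node. A nondeterministic decision tree for $T$ is a decision tree $\Gamma$ whose worker-node attributes lie in $At(T)$, such that $\bigcup_{\xi}\Delta(T\pi(\xi))=\Delta(T)$ (union over complete paths), and for every row $r\in\Delta(T)$ and every complete path $\xi$ with $r\in\Delta(T\pi(\xi))$, $\tau(\xi)$ belongs to the decision set of $r$. A decision tree is deterministic if exactly one edge leaves the root and the edges leaving each worker node have pairwise different labels; a deterministic decision tree for $T$ is a deterministic decision tree that is a nondeterministic decision tree for $T$. A complexity measure over $\mathcal{M}_k(F)$ is any map $\psi:F^*\to\mathbb{N}$, where $F^*$ is the set of finite words over $F$ including the empty word $\lambda$. For a tree, $\psi(\Gamma)=\max_\xi\psi(\varphi(\xi))$ over complete paths. For $T$ with columns labeled $f_1,\dots,f_n$: $\psi^i(T)=\psi(f_1\cdots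 f_n)$, $\psi^d(T)$ is the minimum complexity of a deterministic decision tree for $T$, $\psi^a(T)$ the minimum complexity of a nondeterministic decision tree for $T$. A t-pair $(\mathcal{C},\psi)$ consists of a closed class $\mathcal{C}\subseteq\mathcal{M}_k(F)$ and a complexity measure $\psi$ over $\mathcal{M}_k(F)$. For $b,c\in\{i,d,a\}$ define the partial function $\mathcal{U}^{bc}_{\mathcal{C}\psi}(n)=\max\{\psi^b(T):T\in\mathcal{C},\psi^c(T)\le n\}$ (defined iff this set is nonempty and finite). For a partial function $g:\mathbb{N}\to\mathbb{N}$ with domain $\mathrm{Dom}(g)$, let $\mathrm{Dom}^+(g)=\{n\in\mathrm{Dom}(g):g(n)\ge n\}$, $\mathrm{Dom}^-(g)=\{n\in\mathrm{Dom}(g):g(n)\le n\}$. Its type $\operatorname{typ}(g)$ is: $\alpha$ if $\mathrm{Dom}(g)$ is infinite and $g$ is bounded above; $\beta$ if $\mathrm{Dom}(g)$ is infinite, $\mathrm{Dom}^+(g)$ is finite and $g$ is unbounded above; $\gamma$ if $\mathrm{Dom}^+(g)$ and $\mathrm{Dom}^-(g)$ are both infinite; $\delta$ if $\mathrm{Dom}(g)$ is infinite and $\mathrm{Dom}^-(g)$ is finite; $\epsilon$ if $\mathrm{Dom}(g)$ is finite. *)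

From Stdlib Require List.
From mathcomp Require Import all_boot.

Set Implicit Arguments.
Unset Strict Implicit.
Unset Printing Implicit Defensive.

(* Decision tables over an attribute set F (arbitrary type), values in *)
(* E_k = {0,...,k-1} (naturals < k).  A table stores its column labels *)
(* (f_1 ... f_n) and its rows, in order; each row is a pair            *)
(* (tuple of values, decision set) where the decision set (a nonempty  *)
(* finite subset of N) is represented by a nonempty list of naturals   *)
(* (membership is what matters).                                       *)

Record table (F : Type) := Table {
  attrs : seq F;
  rows : seq (seq nat * seq nat)
}.

Definition is_table (F : Type) (k : nat) (T : table F) : Prop :=
  [/\ 0 < size (attrs T),
      (forall r, r \in rows T ->
         [/\ size r.1 = size (attrs T), all (fun v => v < k) r.1 & r.2 != [::]]),
      uniq (map fst (rows T)) &
      (forall i j, i < size (attrs T) -> j < size (attrs T) ->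
         onth (attrs T) i = onth (attrs T) j ->
         forall r, r \in rows T -> nth 0 r.1 i = nth 0 r.1 j)].

Definition rem_at (T : Type) (i : nat) (s : seq T) : seq T :=
  take i s ++ drop i.+1 s.

Definition dup_at (T : Type) (i : nat) (s : seq T) : seq T :=
  take i.+1 s ++ drop i s.

Definition swap_at (T : Type) (i j : nat) (s : seq T) : seq T :=
  match s with
  | [::] => [::]
  | x0 :: _ =>
      [seq nth x0 s (if t == i then j else if t == j then i else t)
      | t <- iota 0 (size s)]
  end.

Fixpoint undup_first (A : eqType) (B : Type) (s : seq (A * B)) : seq (A * B) :=
  match s with
  | [::] => [::]
  | x :: s' => x :: [seq y <- undup_first s' | y.1 != x.1]
  end.

Inductive table_step (F : Type) (T : table F) : table F -> Prop :=
| step_remove (i : nat) :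
    1 < size (attrs T) -> i < size (attrs T) ->
    table_step T (Table (rem_at i (attrs T))
                        (undup_first [seq (rem_at i r.1, r.2) | r <- rows T]))
| step_change (T' : table F) :
    attrs T' = attrs T ->
    map fst (rows T') = map fst (rows T) ->
    (forall r, r \in rows T' -> r.2 != [::]) ->
    table_step T T'
| step_permute (i j : nat) :
    i < size (attrs T) -> j < size (attrs T) ->
    table_step T (Table (swap_at i j (attrs T))
                        [seq (swap_at i j r.1, r.2) | r <- rows T])
| step_duplicate (i : nat) :
    i < size (attrs T) ->
    table_step T (Table (dup_at i (attrs T))
                        [seq (dup_at i r.1, r.2) | r <- rows T]).

(* closed classes: subsets of M_k(F) closed under the operations
   (closure under one step is equivalent to closure under finitely many) *)
Definition closed_class (F : Type) (k : nat) (C : table F -> Prop) : Prop :=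
  (forall T, C T -> is_table k T) /\
  (forall T T', C T -> table_step T T' -> C T').

(* Decision trees.  A non-root node is either terminal (labelled by a  *)
(* natural number) or a worker node labelled by an attribute, with its *)
(* list of outgoing edges (edge label, child).  A decision tree is the *)
(* list of children of the (unlabelled) root.                          *)

Inductive dnode (F : Type) :=
| Term (a : nat)
| Work (f : F) (ch : seq (nat * dnode F)).

Arguments Term {F} a.

Inductive wf_dnode (F : Type) (k : nat) : dnode F -> Prop :=
| wf_term a : wf_dnode k (Term a)
| wf_work f ch :
    ch <> [::] ->
    (forall d t, List.In (d, t) ch -> d < k) ->
    (forall d t, List.In (d, t) ch -> wf_dnode k t) ->
    wf_dnode k (Work f ch).

Inductive det_dnode (F : Type) : dnode F -> Prop :=
| det_term a : det_dnode (Term a)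
| det_work f ch :
    uniq (map fst ch) ->
    (forall d t, List.In (d, t) ch -> det_dnode t) ->
    det_dnode (Work f ch).

Inductive attrs_in (F : Type) (P : F -> Prop) : dnode F -> Prop :=
| ai_term a : attrs_in P (Term a)
| ai_work f ch :
    P f ->
    (forall d t, List.In (d, t) ch -> attrs_in P t) ->
    attrs_in P (Work f ch).

Inductive cpath (F : Type) : dnode F -> seq (F * nat) -> nat -> Prop :=
| cp_term a : cpath (Term a) [::] a
| cp_work f ch d t p a :
    List.In (d, t) ch -> cpath t p a -> cpath (Work f ch) ((f, d) :: p) a.

Definition dtree (F : Type) := seq (dnode F).

Definition is_dtree (F : Type) (k : nat) (G : dtree F) : Prop :=
  G <> [::] /\ forall t, List.In t G -> wf_dnode k t.

Definition is_det (F : Type) (G : dtree F) : Prop :=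
  exists t, G = [:: t] /\ det_dnode t.

Definition complete_path (F : Type) (G : dtree F) (p : seq (F * nat)) (a : nat)
  : Prop := exists2 t, List.In t G & cpath t p a.

Definition in_sub (F : Type) (T : table F) (r : seq nat) (p : seq (F * nat))
  : Prop :=
  forall f d, List.In (f, d) p ->
    exists c, onth (attrs T) c = Some f /\ nth 0 r c = d.

Definition nondet_tree_for (F : Type) (k : nat) (T : table F) (G : dtree F)
  : Prop :=
  [/\ is_dtree k G,
      (forall t, List.In t G -> attrs_in (fun f => List.In f (attrs T)) t),
      (forall r, r \in rows T -> exists p a, complete_path G p a /\ in_sub T r.1 p) &
      (forall r p a, r \in rows T -> complete_path G p a -> in_sub T r.1 p ->
         a \in r.2)].

Definition det_tree_for (F : Type) (k : nat) (T : table F) (G : dtree F)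
  : Prop := nondet_tree_for k T G /\ is_det G.

Definition tree_cost (F : Type) (psi : seq F -> nat) (G : dtree F) (v : nat)
  : Prop :=
  (exists p a, complete_path G p a /\ psi (map fst p) = v) /\
  (forall p a, complete_path G p a -> psi (map fst p) <= v).

Inductive cmode := Mi | Md | Ma.

Definition psi_of (F : Type) (k : nat) (psi : seq F -> nat) (b : cmode)
  (T : table F) (v : nat) : Prop :=
  match b with
  | Mi => v = psi (attrs T)
  | Md => (exists G, det_tree_for k T G /\ tree_cost psi G v) /\
          (forall G w, det_tree_for k T G -> tree_cost psi G w -> v <= w)
  | Ma => (exists G, nondet_tree_for k T G /\ tree_cost psi G v) /\
          (forall G w, nondet_tree_for k T G -> tree_cost psi G w -> v <= w)
  end.

Definition Uset (F : Type) (k : nat) (C : table F -> Prop) (psi : seq F -> nat)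
  (b c : cmode) (n v : nat) : Prop :=
  exists T, [/\ C T, psi_of k psi b T v & exists w, psi_of k psi c T w /\ w <= n].

(* graph of the partial function U^{bc}_{C psi}: U(n) = m iff m is the
   maximum of the set (defined iff the set is nonempty and finite) *)
Definition U (F : Type) (k : nat) (C : table F -> Prop) (psi : seq F -> nat)
  (b c : cmode) (n m : nat) : Prop :=
  Uset k C psi b c n m /\ forall v, Uset k C psi b c n v -> v <= m.

Definition infinite_set (P : nat -> Prop) : Prop :=
  forall N, exists n, N <= n /\ P n.

Definition finite_set (P : nat -> Prop) : Prop :=
  exists N, forall n, P n -> n < N.

Definition Dom (g : nat -> nat -> Prop) (n : nat) : Prop := exists m, g n m.
Definition DomP (g : nat -> nat -> Prop) (n : nat) : Prop :=
  exists m, g n m /\ n <= m.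
Definition DomM (g : nat -> nat -> Prop) (n : nat) : Prop :=
  exists m, g n m /\ m <= n.

Definition bounded_above (g : nat -> nat -> Prop) : Prop :=
  exists B, forall n m, g n m -> m <= B.

Inductive ftype := Talpha | Tbeta | Tgamma | Tdelta | Tepsilon.

Definition is_typ (g : nat -> nat -> Prop) (t : ftype) : Prop :=
  match t with
  | Talpha => infinite_set (Dom g) /\ bounded_above g
  | Tbeta => [/\ infinite_set (Dom g), finite_set (DomP g) & ~ bounded_above g]
  | Tgamma => infinite_set (DomP g) /\ infinite_set (DomM g)
  | Tdelta => infinite_set (Dom g) /\ finite_set (DomM g)
  | Tepsilon => finite_set (Dom g)
  end.

(* Resetting every decision set to {0} is an operation of the class, keeps
   the attributes, and makes the one-leaf tree (root -> terminal 0) a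
   deterministic decision tree of complexity psi(lambda).  Hence, for
   n >= psi(lambda), every value psi^i(T) with T in C occurs in the set
   defining U^{ic}(n), c = d or a; if U^{ic}(n) were defined, its value
   would bound psi^i on C, and U^{ii} would be of type alpha.  So the
   domain of U^{ic} lies below psi(lambda). *)

From Stdlib Require Import Classical.
From mathcomp Require Import all_boot.

Set Implicit Arguments.
Unset Strict Implicit.
Unset Printing Implicit Defensive.

Lemma ex_minP (P : nat -> Prop) n : P n ->
  exists m, P m /\ forall w, P w -> m <= w.
Proof.
elim/ltn_ind: n => n IH Pn.
case: (classic (exists2 w, w < n & P w)) => [[w ltwn Pw] | no_smaller].
  exact: IH ltwn Pw.
exists n; split=> // w Pw; rewrite leqNgt; apply/negP => ltwn.
by apply: no_smaller; exists w.
Qed.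

Lemma ex_maxP (P : nat -> Prop) B n : P n -> (forall w, P w -> w <= B) ->
  exists m, P m /\ forall w, P w -> w <= m.
Proof.
elim: B => [|B IH] Pn leB.
  have /eqP n0 : n == 0 by rewrite -leqn0 leB.
  by exists 0; split=> [|w /leB //]; rewrite -n0.
case: (classic (P B.+1)) => [PB | nPB]; first by exists B.+1.
apply: IH Pn _ => w Pw; rewrite -ltnS ltn_neqAle leB // andbT.
by apply/eqP => wB; apply: nPB; rewrite -wB.
Qed.

Section OneLeafTree.

Variables (F : Type) (k : nat) (psi : seq F -> nat).

Lemma leaf_det_tree_for (T : table F) a :
  (forall r, r \in rows T -> a \in r.2) -> det_tree_for k T [:: Term a].
Proof.
move=> a_in_rows; split; last by exists (Term a); split=> //; constructor.
split.
- by split=> // t [<- | []]; constructor.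
- by move=> t [<- | []]; constructor.
- move=> r _; exists [::], a; split=> [|f d []].
  by exists (Term a); [left | constructor].
- by move=> r p b /a_in_rows + [t [<- | []] cp]; inversion cp.
Qed.

Lemma leaf_tree_cost a : tree_cost psi [:: Term a] (psi [::]).
Proof.
split; first by exists [::], a; split=> //; exists (Term a); [left | constructor].
by move=> p b [t [<- | []] cp]; inversion cp.
Qed.

Lemma ex_min_tree_cost (good : dtree F -> Prop) G v :
  good G -> tree_cost psi G v ->
  exists w, [/\ exists2 G', good G' & tree_cost psi G' w,
                forall G' w', good G' -> tree_cost psi G' w' -> w <= w' &
                w <= v].
Proof.
move=> goodG costG.
have [w [[G' goodG' costG'] wmin]] :=
  @ex_minP (fun w => exists2 G', good G' & tree_cost psi G' w) v
    (ex_intro2 _ _ G goodG costG).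
exists w; split=> [|G'' w' goodG'' costG''|]; first by exists G'.
  by apply: wmin; exists G''.
by apply: wmin; exists G.
Qed.

Lemma psi_of_le_leaf (T : table F) a c : c <> Mi ->
  (forall r, r \in rows T -> a \in r.2) ->
  exists w, psi_of k psi c T w /\ w <= psi [::].
Proof.
move=> cNi a_in_rows; have detG := leaf_det_tree_for a_in_rows.
case: c cNi => // _.
- have [w [[G ? ?] ? ?]] :=
    ex_min_tree_cost (good := det_tree_for k T) detG (leaf_tree_cost a).
  by exists w; split=> //; split=> //; exists G.
- have [w [[G ? ?] ? ?]] :=
    ex_min_tree_cost (good := nondet_tree_for k T) detG.1 (leaf_tree_cost a).
  by exists w; split=> //; split=> //; exists G.
Qed.

End OneLeafTree.

Section ClosedClass.

Variables (F : Type) (k : nat) (C : table F -> Prop) (psi : seq F -> nat).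
Hypothesis closedC : closed_class k C.

Definition const_decisions (T : table F) : table F :=
  Table (attrs T) [seq (r.1, [:: 0]) | r <- rows T].

Lemma closed_const_decisions T : C T -> C (const_decisions T).
Proof.
move=> CT; apply: closedC.2 CT _; apply: step_change => //=.
  by rewrite -map_comp; apply: eq_map.
by move=> r /mapP [r0 _ ->].
Qed.

Lemma psi_of_const_decisions T c : c <> Mi ->
  exists w, psi_of k psi c (const_decisions T) w /\ w <= psi [::].
Proof.
by move=> cNi; apply: psi_of_le_leaf cNi _ => r /mapP [r0 _ ->]; rewrite inE.
Qed.

Lemma U_bounds_attrs_cost c n m : c <> Mi -> psi [::] <= n ->
  U k C psi Mi c n m -> forall T, C T -> psi (attrs T) <= m.
Proof.
move=> cNi len [_ maxm] T CT.
have [w [psiw lew]] := psi_of_const_decisions T cNi.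
apply: maxm; exists (const_decisions T); split=> //.
  exact: closed_const_decisions.
by exists w; split=> //; apply: leq_trans len.
Qed.

Lemma U_ii_alpha T0 m : C T0 -> (forall T, C T -> psi (attrs T) <= m) ->
  is_typ (U k C psi Mi Mi) Talpha.
Proof.
move=> CT0 boundm; split; last first.
  by exists m => n _ [[T [CT -> _]] _]; apply: boundm.
move=> N; exists (maxn N m); split; first exact: leq_maxl.
have inU : Uset k C psi Mi Mi (maxn N m) (psi (attrs T0)).
  exists T0; split=> //; exists (psi (attrs T0)); split=> //.
  exact: leq_trans (boundm _ CT0) (leq_maxr _ _).
have leU : forall v, Uset k C psi Mi Mi (maxn N m) v -> v <= maxn N m.
  by move=> v [T [_ -> [w [/= -> ?]]]].
have [mx [? ?]] := ex_maxP inU leU.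
by exists mx.
Qed.

Lemma U_ic_epsilon c : c <> Mi -> ~ is_typ (U k C psi Mi Mi) Talpha ->
  is_typ (U k C psi Mi c) Tepsilon.
Proof.
move=> cNi not_alpha; exists (psi [::]) => n [m Unm].
rewrite ltnNge; apply/negP => len; apply: not_alpha.
have [[T [CT _ _]] _] := Unm.
exact: U_ii_alpha CT (U_bounds_attrs_cost cNi len Unm).
Qed.

End ClosedClass.

Theorem lemma5 (F : Type) (k : nat) (C : table F -> Prop) (psi : seq F -> nat) :
  inhabited F -> 2 <= k -> closed_class k C ->
  ~ is_typ (U k C psi Mi Mi) Talpha ->
  is_typ (U k C psi Mi Md) Tepsilon /\ is_typ (U k C psi Mi Ma) Tepsilon.
Proof. by move=> _ _ closedC not_alpha; split; apply: U_ic_epsilon. Qed.
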